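(* Let $(X,d_X)$ be a metric space and $(Y,d_Y)$ a metric space with the uniform Stone property, i.e. $\Delta_Y^{(u)}(r)>0$ for all $r>0$. If there exists a uniform embedding $f\colon X\to Y$, then $X$ has the uniform Stone property, i.e. $\Delta_X^{(u)}(r)>0$ for all $r>0$. If $f$ is a bi-Lipschitz embedding and there is $c>0$ such that $\Delta_Y^{(u)}(r)\geq cr$ for all $r>0$, then $\Delta_X^{(u)}(r)\geq \frac{c}{\mathrm{dist}(f)}r$ for all $r>0$.
   Context: For a metric space $X$ and a cover $\mathcal{U}$ of $X$: $\mathrm{diam}(\mathcal{U})=\sup_{U\in\mathcal{U}}\mathrm{diam}(U)$; $\mathcal{L}(\mathcal{U})=\sup\{d\in[0,\infty): \text{every } E\subseteq X \text{ with } \mathrm{diam}(E)<d \text{ is contained in some } U\in\mathcal{U}\}$; $\mathcal{U}$ is point-finite if each point lies in only finitely many members. $\Delta_X^{(u)}(r)=\sup\{\mathcal{L}(\mathcal{U}): \mathcal{U} \text{ a point-finite cover of } X,\ \mathrm{diam}(\mathcal{U})\leq r\}$. For $f\colon X\to Y$: $\omega_f(t)=\sup\{d_Y(f(x_1),f(x_2)): d_X(x_1,x_2)\leq t\}$, $\rho_f(t)=\inf\{d_Y(f(x_1),f(x_2)): d_X(x_1,x_2)\geq t\}$; $f$ is a uniform embedding if $\lim_{t\to0}\omega_f(t)=0$ and $\rho_f(t)>0$ for all $t>0$; a bi-Lipschitz embedding if there is $A\geq1$ with $\omega_f(t)\leq At$, $\rho_f(t)\geq t/A$. $\mathrm{Lip}(f)=\sup_{x_1\neq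 x_2} d_Y(f(x_1),f(x_2))/d_X(x_1,x_2)$, and for injective $f$, $\mathrm{dist}(f)=\mathrm{Lip}(f)\cdot\mathrm{Lip}(f^{-1})$. *)

From HB Require Import structures.
From mathcomp Require Import all_boot all_order all_algebra.
From mathcomp Require Import all_classical all_reals ereal.
Set Implicit Arguments. Unset Strict Implicit. Unset Printing Implicit Defensive.
Import Order.TTheory GRing.Theory Num.Theory.
Local Open Scope classical_set_scope.
Local Open Scope ring_scope.
Local Open Scope ereal_scope.

Section Defs.
Variable R : realType.

Definition is_metric (T : Type) (d : T -> T -> R) : Prop :=
  [/\ (forall x y, (0 <= d x y)%R),
      (forall x y, d x y = 0%R <-> x = y),
      (forall x y, d x y = d y x) &
      (forall x y z, (d x z <= d x y + d y z)%R)].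

(* diameter, in the extended reals (diam of the empty set is -oo) *)
Definition diam (T : Type) (d : T -> T -> R) (E : set T) : \bar R :=
  ereal_sup [set (d x y)%:E | x in E & y in E].

Definition is_cover (T : Type) (U : set (set T)) : Prop :=
  forall x : T, exists2 A, U A & A x.

Definition point_finite (T : Type) (U : set (set T)) : Prop :=
  forall x : T, finite_set [set A | U A /\ A x].

Definition cover_diam (T : Type) (d : T -> T -> R) (U : set (set T)) : \bar R :=
  ereal_sup [set diam d A | A in U].

Definition lebesgue_number (T : Type) (d : T -> T -> R) (U : set (set T)) : \bar R :=
  ereal_sup [set delta%:E | delta in
    [set delta : R | (0 <= delta)%R /\
       forall E : set T, diam d E < delta%:E -> exists2 A, U A & E `<=` A]].

Definition Delta_u (T : Type) (d : T -> T -> R) (r : R) : \bar R :=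
  ereal_sup [set lebesgue_number d U | U in
    [set U : set (set T) | is_cover U /\ point_finite U /\ cover_diam d U <= r%:E]].

Definition uniform_stone (T : Type) (d : T -> T -> R) : Prop :=
  forall r : R, (0 < r)%R -> 0 < Delta_u d r.

Definition omega_f (X Y : Type) (dX : X -> X -> R) (dY : Y -> Y -> R)
  (f : X -> Y) (t : R) : \bar R :=
  ereal_sup [set (dY (f p.1) (f p.2))%:E | p in [set p : X * X | (dX p.1 p.2 <= t)%R]].

Definition rho_f (X Y : Type) (dX : X -> X -> R) (dY : Y -> Y -> R)
  (f : X -> Y) (t : R) : \bar R :=
  ereal_inf [set (dY (f p.1) (f p.2))%:E | p in [set p : X * X | (t <= dX p.1 p.2)%R]].

Definition uniform_embedding (X Y : Type) (dX : X -> X -> R) (dY : Y -> Y -> R)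
  (f : X -> Y) : Prop :=
  (forall eps : R, (0 < eps)%R -> exists2 delta : R, (0 < delta)%R &
      forall t : R, (0 <= t)%R -> (t < delta)%R -> `|omega_f dX dY f t| <= eps%:E)
  /\ (forall t : R, (0 < t)%R -> 0 < rho_f dX dY f t).

Definition bilipschitz_embedding (X Y : Type) (dX : X -> X -> R) (dY : Y -> Y -> R)
  (f : X -> Y) : Prop :=
  exists2 A : R, (1 <= A)%R &
    forall t : R, (0 < t)%R ->
      omega_f dX dY f t <= (A * t)%:E /\ (t / A)%:E <= rho_f dX dY f t.

Definition Lip (X Y : Type) (dX : X -> X -> R) (dY : Y -> Y -> R) (f : X -> Y) : \bar R :=
  ereal_sup [set (dY (f p.1) (f p.2) / dX p.1 p.2)%:E | p in [set p : X * X | p.1 <> p.2]].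

(* Lip(f^{-1}) for injective f, computed on the image f(X) *)
Definition Lip_inv (X Y : Type) (dX : X -> X -> R) (dY : Y -> Y -> R) (f : X -> Y) : \bar R :=
  ereal_sup [set (dX p.1 p.2 / dY (f p.1) (f p.2))%:E | p in [set p : X * X | p.1 <> p.2]].

Definition distortion (X Y : Type) (dX : X -> X -> R) (dY : Y -> Y -> R) (f : X -> Y) : \bar R :=
  Lip dX dY f * Lip_inv dX dY f.

End Defs.

From HB Require Import structures.
From mathcomp Require Import all_boot all_order all_algebra.
From mathcomp Require Import all_classical all_reals ereal.
From mathcomp Require Import ring lra.
Set Implicit Arguments. Unset Strict Implicit. Unset Printing Implicit Defensive.
Import Order.TTheory GRing.Theory Num.Theory.
Local Open Scope classical_set_scope.
Local Open Scope ring_scope.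
Local Open Scope ereal_scope.

(** Pull a point-finite cover of [Y] with small members and a large
    Lebesgue number back along [f]: the preimages again form a point-finite
    cover; their members are small because [f] does not bring far points
    close together, and their Lebesgue number is large because [f] does not
    tear close points apart.  A uniform embedding controls both effects by
    moduli; a bi-Lipschitz one controls them linearly, with constants
    [Lip f] and [Lip f^-1] whose product is the distortion. *)

Section Diameters.
Variables (R : realType) (T : Type) (d : T -> T -> R).

Lemma diam_le (E : set T) (a : \bar R) :
  (forall x y, E x -> E y -> (d x y)%:E <= a) -> diam d E <= a.
Proof. by move=> dE; apply: ge_ereal_sup => _ [x Ex [y Ey <-]]; exact: dE. Qed.

Lemma dist_le_diam (E : set T) x y : E x -> E y -> (d x y)%:E <= diam d E.
Proof. by move=> Ex Ey; apply: ereal_sup_ubound; exists x => //; exists y. Qed.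

Lemma cover_diam_le (U : set (set T)) (r : R) :
  (forall A x y, U A -> A x -> A y -> (d x y <= r)%R) -> cover_diam d U <= r%:E.
Proof.
move=> dU; apply: ge_ereal_sup => _ [A UA <-].
by apply: diam_le => x y Ax Ay; rewrite lee_fin; exact: (dU A).
Qed.

Lemma cover_diam_le_dist (U : set (set T)) (r : R) A x y :
  cover_diam d U <= r%:E -> U A -> A x -> A y -> (d x y <= r)%R.
Proof.
move=> dU UA Ax Ay; rewrite -lee_fin; apply: le_trans _ dU.
apply: le_trans (dist_le_diam Ax Ay) _.
by apply: ereal_sup_ubound; exists A.
Qed.

Lemma Delta_u_ge_cover (U : set (set T)) (r delta : R) :
  is_cover U -> point_finite U -> cover_diam d U <= r%:E -> (0 <= delta)%R ->
  (forall E, diam d E < delta%:E -> exists2 A, U A & E `<=` A) ->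
  delta%:E <= Delta_u d r.
Proof.
move=> coverU finU diamU delta_ge0 lebU.
apply: (@le_trans _ _ (lebesgue_number d U)).
  by apply: ereal_sup_ubound; exists delta.
by apply: ereal_sup_ubound; exists U.
Qed.

Lemma Delta_u_gt_cover (r e : R) : e%:E < Delta_u d r ->
  exists2 U : set (set T),
    [/\ is_cover U, point_finite U & cover_diam d U <= r%:E] &
    exists2 delta : R, (e < delta)%R &
      forall E, diam d E < delta%:E -> exists2 A, U A & E `<=` A.
Proof.
move=> /ereal_sup_gt[_ [U [coverU [finU diamU]] <-]].
move=> /ereal_sup_gt[_ [delta [_ lebU] <-]]; rewrite lte_fin => e_lt_delta.
by exists U => //; exists delta.
Qed.

Lemma Delta_u_ge0_subsingleton (r : R) :
  (forall x y : T, x = y) -> (forall x, d x x = 0%R) -> (0 <= r)%R ->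
  0 <= Delta_u d r.
Proof.
move=> Tsub d_refl r_ge0.
apply: (@Delta_u_ge_cover [set setT]) => //.
- by move=> x; exists setT.
- by move=> x; apply: (@sub_finite_set _ _ [set setT]) (finite_set1 _) => A [].
- by apply: cover_diam_le => A x y _ _ _; rewrite (Tsub x y) d_refl.
- by move=> E _; exists setT.
Qed.

End Diameters.

Lemma ereal_sup_ratio (R : realType) (P : Type) (S : set P) (u v : P -> R)
    (A : R) p0 :
  S p0 -> (forall p, S p -> 0 < u p)%R -> (forall p, S p -> 0 < v p)%R ->
  (forall p, S p -> u p <= A * v p)%R ->
  exists2 l : R, (0 < l)%R & ereal_sup [set (u p / v p)%:E | p in S] = l%:E /\
    forall p, S p -> (u p <= l * v p)%R.
Proof.
move=> Sp0 u_gt0 v_gt0 uA.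
set s := ereal_sup _.
have s_ge p : S p -> (u p / v p)%:E <= s.
  by move=> Sp; apply: ereal_sup_ubound; exists p.
have s_le : s <= A%:E.
  by apply: ge_ereal_sup => _ [p Sp <-]; rewrite lee_fin ler_pdivrMr ?uA ?v_gt0.
have s_gt0 : 0 < s.
  by apply: lt_le_trans (s_ge _ Sp0); rewrite lte_fin divr_gt0 ?u_gt0 ?v_gt0.
move: s_ge s_le s_gt0; case: s => [l s_ge _ l_gt0||] //.
exists l => //; split=> // p Sp.
by rewrite -ler_pdivrMr ?v_gt0 // -lee_fin; exact: s_ge.
Qed.

Lemma gt0_exists_EFin_lt (R : realType) (z : \bar R) :
  0 < z -> exists2 e : R, (0 < e)%R & e%:E < z.
Proof.
case: z => [z||] //; last by exists 1%R; rewrite ?ltry.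
rewrite lte_fin => z_gt0; exists (z / 2)%R; first by rewrite divr_gt0.
by rewrite lte_fin; lra.
Qed.

Section Preimage.
Variables (R : realType) (X Y : Type) (dX : X -> X -> R) (dY : Y -> Y -> R).
Variable f : X -> Y.

Lemma is_cover_preimage (V : set (set Y)) :
  is_cover V -> is_cover [set f @^-1` B | B in V].
Proof.
move=> coverV x; have [B VB Bfx] := coverV (f x).
by exists (f @^-1` B) => //; exists B.
Qed.

Lemma point_finite_preimage (V : set (set Y)) :
  point_finite V -> point_finite [set f @^-1` B | B in V].
Proof.
move=> finV x.
apply: (@sub_finite_set _ _ (preimage f @` [set B | V B /\ B (f x)])).
  by move=> _ [[B VB <-] Bx]; exists B.
exact/finite_image/finV.
Qed.

Lemma Delta_u_preimage (r s a b : R) :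
  (0 <= a)%R ->
  (forall x y, (dX x y < a)%R -> (dY (f x) (f y) <= b)%R) ->
  (forall x y, (dY (f x) (f y) <= s)%R -> (dX x y <= r)%R) ->
  b%:E < Delta_u dY s -> a%:E <= Delta_u dX r.
Proof.
move=> a_ge0 f_modulus f_comodulus /Delta_u_gt_cover[V [coverV finV diamV]].
move=> [delta b_lt_delta lebV].
apply: (Delta_u_ge_cover (is_cover_preimage coverV)
  (point_finite_preimage finV)).
- apply: cover_diam_le => _ x y [B VB <-] Bfx Bfy; apply: f_comodulus.
  exact: cover_diam_le_dist diamV VB Bfx Bfy.
- exact: a_ge0.
move=> E diamE; have [|B VB EB] := lebV (f @` E).
  apply: le_lt_trans _ (_ : b%:E < delta%:E); last by rewrite lte_fin.
  apply: diam_le => _ _ [x Ex <-] [y Ey <-]; rewrite lee_fin; apply: f_modulus.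
  by rewrite -lte_fin; exact: le_lt_trans (dist_le_diam dX Ex Ey) diamE.
by exists (f @^-1` B); [exists B | move=> x Ex; apply: EB; exists x].
Qed.

Lemma Delta_u_preimage_lipschitz (l m s z : R) :
  (0 < l)%R -> (0 < m)%R ->
  (forall x y, dY (f x) (f y) <= l * dX x y)%R ->
  (forall x y, dX x y <= m * dY (f x) (f y))%R ->
  (0 < z)%R -> z%:E <= Delta_u dY s -> (z / l)%:E <= Delta_u dX (m * s).
Proof.
move=> l_gt0 m_gt0 f_lip finv_lip z_gt0 z_le_Delta.
apply/lee_mul01Pr; first by rewrite lee_fin divr_ge0 ?ltW.
move=> e /andP[e_gt0 e_lt1]; rewrite -EFinM.
apply: (@Delta_u_preimage _ s _ (e * z)) => [|x y dxy_lt|x y dfxy_le|].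
- by rewrite mulr_ge0 ?divr_ge0 ?ltW.
- apply: le_trans (f_lip x y) (le_trans (ler_wpM2l (ltW l_gt0) (ltW dxy_lt)) _).
  by rewrite mulrCA [(l * _)%R]mulrC divfK ?gt_eqF.
- by apply: le_trans (finv_lip x y) _; rewrite ler_pM2l.
- by apply: lt_le_trans z_le_Delta; rewrite lte_fin gtr_pMl.
Qed.

End Preimage.

Section Embeddings.
Variables (R : realType) (X Y : Type) (dX : X -> X -> R) (dY : Y -> Y -> R).
Variable f : X -> Y.

Lemma dist_le_omega_f x y : (dY (f x) (f y))%:E <= omega_f dX dY f (dX x y).
Proof. by apply: ereal_sup_ubound; exists (x, y) => /=. Qed.

Lemma rho_f_le_dist (t : R) x y :
  (t <= dX x y)%R -> rho_f dX dY f t <= (dY (f x) (f y))%:E.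
Proof. by move=> t_le; apply: ereal_inf_lbound; exists (x, y). Qed.

Lemma uniform_stone_uniform_embedding :
  is_metric dX -> uniform_stone dY -> uniform_embedding dX dY f ->
  uniform_stone dX.
Proof.
move=> [dX_ge0 _ _ _] stoneY [f_unif f_rho] r r_gt0.
have [s s_gt0 s_lt_rho] := gt0_exists_EFin_lt (f_rho r r_gt0).
have [b b_gt0 b_lt_Delta] := gt0_exists_EFin_lt (stoneY s s_gt0).
have [a a_gt0 omega_le_b] := f_unif b b_gt0.
apply: lt_le_trans (_ : a%:E <= _); first by rewrite lte_fin.
apply: (Delta_u_preimage (ltW a_gt0) _ _ b_lt_Delta) => x y.
- move=> dxy_lt_a; rewrite -lee_fin.
  apply: le_trans (dist_le_omega_f x y) _.
  exact: le_trans (lee_abs _) (omega_le_b _ (dX_ge0 x y) dxy_lt_a).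
- move=> dfxy_le_s; rewrite leNgt; apply/negP => /ltW /rho_f_le_dist rho_le.
  by move: (lt_le_trans s_lt_rho rho_le); rewrite lte_fin ltNge dfxy_le_s.
Qed.

Lemma bilipschitz_embedding_dist :
  is_metric dX -> is_metric dY -> bilipschitz_embedding dX dY f ->
  exists2 A : R, (0 < A)%R & forall x y,
    (dY (f x) (f y) <= A * dX x y)%R /\ (dX x y <= A * dY (f x) (f y))%R.
Proof.
move=> [dX_ge0 dX_eq0 _ _] [_ dY_eq0 _ _] [A A_ge1 fA].
have A_gt0 : (0 < A)%R by lra.
exists A => // x y; have [<-|nxy] := pselect (x = y).
  by rewrite (proj2 (dX_eq0 x x) erefl) (proj2 (dY_eq0 _ _) erefl) mulr0.
have dxy_gt0 : (0 < dX x y)%R.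
  by rewrite lt_def dX_ge0 andbT; apply/eqP => /dX_eq0.
have [omega_le rho_ge] := fA _ dxy_gt0; split.
  by rewrite -lee_fin; exact: le_trans (dist_le_omega_f x y) omega_le.
rewrite mulrC -ler_pdivrMr // -lee_fin.
exact: le_trans rho_ge (rho_f_le_dist (lexx _)).
Qed.

Lemma distortion_bilipschitz (x0 y0 : X) :
  is_metric dX -> is_metric dY -> bilipschitz_embedding dX dY f -> x0 <> y0 ->
  exists l m : R, [/\ (0 < l)%R, (0 < m)%R, distortion dX dY f = (l * m)%:E,
    forall x y, (dY (f x) (f y) <= l * dX x y)%R &
    forall x y, (dX x y <= m * dY (f x) (f y))%R].
Proof.
move=> metricX metricY fbi nxy0.
have [A A_gt0 fA] := bilipschitz_embedding_dist metricX metricY fbi.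
have [dX_ge0 dX_eq0 _ _] := metricX; have [_ dY_eq0 _ _] := metricY.
pose S := [set p : X * X | p.1 <> p.2].
have dX_gt0 p : S p -> (0 < dX p.1 p.2)%R.
  by move=> Sp; rewrite lt_def dX_ge0 andbT; apply/eqP => /dX_eq0.
have dY_gt0 p : S p -> (0 < dY (f p.1) (f p.2))%R.
  move=> Sp; have := (fA p.1 p.2).2; rewrite -ler_pdivrMl //.
  by apply: lt_le_trans; rewrite mulr_gt0 ?invr_gt0 ?dX_gt0.
have Sp0 : S (x0, y0) by [].
have [l l_gt0 [Lip_l f_lip]] :=
  ereal_sup_ratio Sp0 dY_gt0 dX_gt0 (fun p _ => (fA p.1 p.2).1).
have [m m_gt0 [Lip_inv_m finv_lip]] :=
  ereal_sup_ratio Sp0 dX_gt0 dY_gt0 (fun p _ => (fA p.1 p.2).2).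
have on_diagonal x y : x = y -> (dX x y = 0 /\ dY (f x) (f y) = 0)%R.
  by move=> <-; split; [apply/dX_eq0 | apply/dY_eq0].
exists l, m; split=> //.
- by rewrite /distortion /Lip /Lip_inv Lip_l Lip_inv_m.
- move=> x y; have [/on_diagonal[-> ->]|nxy] := pselect (x = y).
    by rewrite mulr0.
  exact: (f_lip (x, y)).
- move=> x y; have [/on_diagonal[-> ->]|nxy] := pselect (x = y).
    by rewrite mulr0.
  exact: (finv_lip (x, y)).
Qed.

(* Both suprema range over the empty set, and -oo * -oo = +oo in \bar R. *)
Lemma distortion_subsingleton :
  (forall x y : X, x = y) -> distortion dX dY f = +oo.
Proof.
move=> Xsub; rewrite /distortion /Lip /Lip_inv.
have -> : [set p : X * X | p.1 <> p.2] = set0.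
  by apply/seteqP; split=> // -[x y] /= /(_ (Xsub x y)).
by rewrite !image_set0 ereal_sup0.
Qed.

End Embeddings.

Theorem proposition3p8 (R : realType) (X Y : Type)
  (dX : X -> X -> R) (dY : Y -> Y -> R) :
  is_metric dX -> is_metric dY -> uniform_stone dY ->
  (forall f : X -> Y, uniform_embedding dX dY f -> uniform_stone dX) /\
  (forall (f : X -> Y) (c : R), bilipschitz_embedding dX dY f -> (0 < c)%R ->
     (forall r : R, (0 < r)%R -> (c * r)%:E <= Delta_u dY r) ->
     forall r : R, (0 < r)%R ->
       (c * r)%:E * (distortion dX dY f)^-1 <= Delta_u dX r).
Proof.
move=> metricX metricY stoneY; split=> [f|f c fbi c_gt0 linearY r r_gt0].
  exact: uniform_stone_uniform_embedding.
have [[x0 [y0 nxy0]]|nonXsub] := pselect (exists x y : X, x <> y).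
  have [l [m [l_gt0 m_gt0 -> f_lip finv_lip]]] :=
    distortion_bilipschitz metricX metricY fbi nxy0.
  have rm_gt0 : (0 < r / m)%R by rewrite divr_gt0.
  have := Delta_u_preimage_lipschitz l_gt0 m_gt0 f_lip finv_lip
    (mulr_gt0 c_gt0 rm_gt0) (linearY _ rm_gt0).
  rewrite [(m * _)%R]mulrC divfK ?gt_eqF // inver gt_eqF ?mulr_gt0 // -EFinM.
  suff -> : (c * r * (l * m)^-1 = c * (r / m) / l)%R by [].
  by field; rewrite !gt_eqF.
have Xsub (x y : X) : x = y by apply: contra_notP nonXsub => nxy; exists x, y.
rewrite distortion_subsingleton // invey mule0.
apply: Delta_u_ge0_subsingleton (ltW r_gt0) => // x.
by have [_ /(_ x x)[_ ->]] := metricX.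
Qed.
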